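(* Let $(V,\mathcal H,\iota,W)$ be a generalized functional theory. The dimension of the set $\iota^*(\mathcal E)$ of ensemble-state-representable densities equals $\dim V-\dim\iota^{-1}(\mathrm{span}\{\mathbb 1\})$. In particular $\iota^*(\mathcal E)$ has full dimension in $V^*$ if and only if $\iota$ is injective and $\mathbb 1$ is not in the image of $\iota$; precisely, $\mathrm{aff}(\iota^*(\mathcal E))=V^*$ if and only if $\iota^{-1}(\mathrm{span}\{\mathbb 1\})=0$.
   Context: A generalized functional theory is a tuple $(V,\mathcal H,\iota,W)$ with $V$ a finite-dimensional real vector space, $\mathcal H$ a finite-dimensional complex Hilbert space, $\iota:V\to i\mathfrak u(\mathcal H)$ a linear map into the Hermitian operators, and $W$ Hermitian. Density operators are regarded as elements of $(i\mathfrak u(\mathcal H))^*$ via the trace pairing; $\iota^*$ is the dual map. $\mathcal E$ is the set of density operators, $\mathbb 1$ the identity on $\mathcal H$, and $\mathrm{aff}$ the affine hull. *)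

From HB Require Import structures.
From mathcomp Require Import all_boot all_order all_algebra complex.
From mathcomp Require Import reals.
Set Implicit Arguments. Unset Strict Implicit. Unset Printing Implicit Defensive.
Import Order.TTheory GRing.Theory Num.Theory.
Local Open Scope ring_scope.

Definition density_op (C : numClosedFieldType) (n : nat) (rho : 'M[C]_n) : Prop :=
  [/\ rho \is hermsymmx,
      (forall x : 'cV[C]_n, 0 <= ((map_mx Num.conj x)^T *m rho *m x) 0 0)
    & \tr rho = 1].

Definition gft_map (R : realType) (V : vectType R) (n : nat)
    (iota : V -> 'M[R[i]]_n) : Prop :=
  [/\ forall u v, iota (u + v) = iota u + iota v,
      forall (a : R) v, iota (a *: v) = (real_complex R a) *: iota v
    & forall v, iota v \is hermsymmx].

(* The dual map: iota^* rho = (v |-> tr (rho iota(v))) in V^* = 'Hom(V, R).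
   (The trace is real since rho and iota v are Hermitian.) *)
Definition iota_star (R : realType) (V : vectType R) (n : nat)
    (iota : V -> 'M[R[i]]_n) (rho : 'M[R[i]]_n) : 'Hom(V, R^o) :=
  linfun (fun v : V => (complex.Re (\tr (rho *m iota v)) : R^o)).

Definition rep_densities (R : realType) (V : vectType R) (n : nat)
    (iota : V -> 'M[R[i]]_n) : 'Hom(V, R^o) -> Prop :=
  fun f => exists rho : 'M[R[i]]_n, density_op rho /\ f = iota_star iota rho.

Definition in_aff_hull (K : fieldType) (vT : vectType K) (S : vT -> Prop)
    (x : vT) : Prop :=
  exists (ps : seq vT) (c : seq K),
    [/\ size c = size ps, (forall p, p \in ps -> S p),
        \sum_(i < size c) c`_i = 1
      & x = \sum_(i < size ps) c`_i *: ps`_i].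

Definition aff_dim (K : fieldType) (vT : vectType K) (S : vT -> Prop)
    (d : nat) : Prop :=
  exists U : {vspace vT},
    (forall x, x \in U <->
       exists a b, [/\ in_aff_hull S a, in_aff_hull S b & x = a - b])
    /\ \dim U = d.

(* The affine hull of iota^*(E) is iota^*(rho0) + Ann(K), where rho0 = 1/n is
   the maximally mixed state and K = iota^-1(span 1).  Every functional in the
   hull takes the value c at v whenever iota v = c 1, which gives one
   inclusion.  For the other, the spectral theorem writes any Hermitian B of
   trace one as an affine combination of pure states, so iota^*(B) lies in the
   hull; it remains to see that the functionals iota^*(T), T Hermitian and
   traceless, exhaust Ann(K).  The map v |-> iota^*(T v), with T v the
   traceless part of iota v, takes the value tr((T v)^2) at v, so its kernel
   is K, and its image lies in Ann(K) and has the same dimension. *)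
From HB Require Import structures.
From mathcomp Require Import all_boot all_order all_algebra complex reals zify.
Set Implicit Arguments. Unset Strict Implicit. Unset Printing Implicit Defensive.
Import Order.TTheory GRing.Theory Num.Theory.
Local Open Scope ring_scope.
Local Open Scope sesquilinear_scope.
Local Open Scope complex_scope.

Lemma linfun_linearE (K : nzRingType) (aT rT : vectType K) (f : aT -> rT) :
  linear f -> linfun f =1 f.
Proof.
move=> f_lin.
exact: lfunE (HB.pack f (GRing.isLinear.Build _ _ _ _ f f_lin) : {linear aT -> rT}).
Qed.

Section AffineHull.
Variables (K : fieldType) (vT : vectType K).

Lemma in_aff_hull_sum (S : vT -> Prop) (I : finType) (c : I -> K) (x : I -> vT) :
  (forall i, S (x i)) -> \sum_i c i = 1 -> in_aff_hull S (\sum_i c i *: x i).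
Proof.
move=> Sx sum_c; pose s := [seq (c i, x i) | i <- enum I].
have sum_s (M : nmodType) (F : K * vT -> M) :
    \sum_(j < size s) F (nth 0 s j) = \sum_i F (c i, x i).
  rewrite -(big_mkord xpredT (fun j => F (nth 0 s j))) -(big_nth 0 xpredT F).
  by rewrite big_map big_enum.
exists (map snd s), (map fst s); split.
- by rewrite !size_map.
- move=> p /mapP [q]; rewrite /s => /mapP [i _ ->] ->; exact: Sx.
- rewrite size_map -[RHS]sum_c -(sum_s _ fst); apply: eq_bigr => j _.
  by rewrite (nth_map 0).
- rewrite size_map -(sum_s _ (fun p => p.1 *: p.2)); apply: eq_bigr => j _.
  by rewrite !(nth_map 0).
Qed.

Lemma in_aff_hull_lfunE (aT : vectType K) (S : 'Hom(aT, vT) -> Prop) v y f :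
  (forall g, S g -> g v = y) -> in_aff_hull S f -> f v = y.
Proof.
move=> Sy [ps [c [size_c Sps sum_c ->]]].
rewrite sum_lfunE (eq_bigr (fun i : 'I_(size ps) => c`_i *: y)) => [|i _]; last first.
  by rewrite scale_lfunE Sy //; apply/Sps/mem_nth.
by rewrite -scaler_suml -size_c sum_c scale1r.
Qed.

End AffineHull.

Section Annihilator.
Variables (F : fieldType) (V : vectType F) (U : {vspace V}).

Lemma dim_dual : \dim {:'Hom(V, F^o)} = \dim {:V}.
Proof. by rewrite !dimvf /dim /= muln1. Qed.

Definition restrict_dual : 'Hom('Hom(V, F^o), 'Hom(subvs_of U, F^o)) :=
  linfun (fun f : 'Hom(V, F^o) => (f \o linfun vsval)%VF).

Lemma restrict_dualE f : restrict_dual f = (f \o linfun vsval)%VF.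
Proof.
by apply: linfun_linearE => a g h; rewrite comp_lfunDl comp_lfunZl.
Qed.

Definition annihilator := lker restrict_dual.

Lemma annihilatorP (f : 'Hom(V, F^o)) :
  reflect {in U, forall v, f v = 0} (f \in annihilator).
Proof.
rewrite memv_ker restrict_dualE.
apply: (iffP eqP) => [f0 v vU | f0].
  have /lfunP/(_ (vsproj U v)) := f0.
  by rewrite comp_lfunE lfunE /= vsprojK // zero_lfunE.
by apply/lfunP => u; rewrite comp_lfunE lfunE /= zero_lfunE f0 // subvsP.
Qed.

Lemma dim_annihilator : \dim annihilator = (\dim {:V} - \dim U)%N.
Proof.
have restrict_onto : limg restrict_dual = fullv.
  apply/vspaceP => g; rewrite memvf; apply/memv_imgP.
  exists (g \o linfun (vsproj U))%VF; first by rewrite memvf.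
  by apply/lfunP => u; rewrite restrict_dualE !comp_lfunE !lfunE /= vsvalK.
have := limg_ker_dim restrict_dual fullv.
by rewrite capfv restrict_onto !dim_dual => <-; rewrite !dimvf /dim /= muln1 addnK.
Qed.

Lemma annihilator_eqf : (annihilator == fullv) = (U == 0%VS).
Proof.
rewrite -(dimv_leqif_eq (subvf _)).2 -dimv_eq0 dim_annihilator dim_dual.
have := dimvS (subvf U); lia.
Qed.

End Annihilator.

Section Traceless.
Variables (F : fieldType) (n : nat).
Implicit Types A : 'M[F]_n.

Definition traceless A := A - (\tr A / n%:R)%:M.

Fact traceless_is_linear : linear traceless.
Proof.
move=> a A B; rewrite /traceless mxtraceD mxtraceZ mulrDl -mulrA raddfD /=.
by rewrite -scale_scalar_mx scalerBr opprD addrACA.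
Qed.

HB.instance Definition _ :=
  GRing.isLinear.Build F 'M[F]_n 'M[F]_n *:%R traceless traceless_is_linear.

Hypothesis n_neq0 : n%:R != 0 :> F.

Lemma mxtrace_traceless A : \tr (traceless A) = 0.
Proof. by rewrite raddfB /= mxtrace_scalar -[_ *+ n]mulr_natr divfK // subrr. Qed.

Lemma traceless_scalar c : traceless c%:M = 0.
Proof. by rewrite /traceless mxtrace_scalar -[_ *+ n]mulr_natr mulfK // subrr. Qed.

End Traceless.

Section Hermitian.
Variables (C : numClosedFieldType) (n : nat).
Implicit Types (A B : 'M[C]_n) (u : 'rV[C]_n).

Lemma hermsymmxP A : reflect (A^t* = A) (A \is hermsymmx).
Proof. by rewrite qualifE expr0 scale1r eq_sym; apply: eqP. Qed.

Lemma hermsymmxD A B : A \is hermsymmx -> B \is hermsymmx -> A + B \is hermsymmx.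
Proof.
move=> /hermsymmxP A_herm /hermsymmxP B_herm; apply/hermsymmxP.
by rewrite linearD map_mxD /= A_herm B_herm.
Qed.

Lemma scalar_hermsymmx (c : C) : c \is Num.real -> (c%:M : 'M_n) \is hermsymmx.
Proof.
by move=> /CrealP c_real; apply/hermsymmxP; rewrite tr_scalar_mx map_scalar_mx /= c_real.
Qed.

Lemma hermsymmx_trace_real A : A \is hermsymmx -> \tr A \is Num.real.
Proof.
move=> /hermsymmxP A_herm; apply/CrealP; rewrite -{2}A_herm.
by rewrite /mxtrace rmorph_sum; apply: eq_bigr => i _; rewrite !mxE.
Qed.

Lemma mxtrace_mul_trC A : \tr (A *m A^t*) = \sum_i \sum_j A i j * (A i j)^*.
Proof. by apply: eq_bigr => i _; rewrite mxE; apply: eq_bigr => j _; rewrite !mxE. Qed.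

Lemma mxtrace_mul_trC_ge0 A : 0 <= \tr (A *m A^t*).
Proof.
by rewrite mxtrace_mul_trC; do 2![apply: sumr_ge0 => ? _]; exact: mul_conjC_ge0.
Qed.

Lemma mxtrace_mul_trC_eq0 A : (\tr (A *m A^t*) == 0) = (A == 0).
Proof.
apply/idP/eqP => [|->]; last by rewrite mul0mx mxtrace0.
rewrite mxtrace_mul_trC psumr_eq0 => [/allP A0|i _]; last first.
  by apply: sumr_ge0 => j _; exact: mul_conjC_ge0.
apply/matrixP => i j; rewrite mxE; apply/eqP; rewrite -mul_conjC_eq0.
move: (A0 i (mem_index_enum i)); rewrite psumr_eq0 => [/allP/(_ j)|k _].
  by rewrite mem_index_enum => /(_ isT).
exact: mul_conjC_ge0.
Qed.

Lemma density_op_rank1 u : dotmx u u = 1 -> density_op (u^t* *m u).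
Proof.
move=> u_unit; split.
- by apply/hermsymmxP; rewrite trmx_mul map_mxM trmxCK.
- move=> x; rewrite map_trmx !mulmxA -mulmxA -map_mxM -trmx_mul.
  rewrite mxE big_ord1 !mxE mulrC; exact: mul_conjC_ge0.
- by rewrite mxtrace_mulC trace_mx11 -dotmxE.
Qed.

Lemma hermsymmx_density_decomposition B : B \is hermsymmx ->
  exists (d : 'I_n -> C) (rho : 'I_n -> 'M[C]_n),
    [/\ forall i, d i \is Num.real, forall i, density_op (rho i)
      & B = \sum_i d i *: rho i].
Proof.
move=> B_herm; pose P := spectralmx B; pose d := spectral_diag B.
have P_unitary : P \is unitarymx := spectral_unitarymx B.
exists (fun i => d 0 i), (fun i => (row i P)^t* *m row i P); split.
- by move=> i; apply: (mxOverP (hermitian_spectral_diag_real B_herm)).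
- move=> i; apply: density_op_rank1.
  by have /row_unitarymxP/(_ i i) := P_unitary; rewrite eqxx.
- have /orthomx_spectralP -> := hermitian_normalmx B_herm.
  rewrite invmx_unitary // mul_mx_diag; apply/matrixP => a b.
  rewrite !mxE summxE; apply: eq_bigr => i _.
  by rewrite !mxE big_ord1 !mxE mulrCA mulrA.
Qed.

Lemma traceless_hermsymmx A :
  A \is hermsymmx -> traceless A \is hermsymmx.
Proof.
move=> A_herm; rewrite /traceless -scaleN1r scale_scalar_mx hermsymmxD //.
by rewrite scalar_hermsymmx // !rpredM ?rpredN1 ?rpredV ?realn ?hermsymmx_trace_real.
Qed.

End Hermitian.

Lemma Re_realM (R : fieldType) (a : R) (z : R[i]) :
  complex.Re (a%:C * z) = a * complex.Re z.
Proof. by case: z => x y /=; rewrite mul0r subr0. Qed.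

Section GeneralizedFunctionalTheory.
Variables (R : realType) (V : vectType R) (n : nat) (iota : V -> 'M[R[i]]_n).
Hypotheses (n_gt0 : (0 < n)%N) (iota_gft : gft_map iota).
Local Notation C := R[i].
Local Notation S := (rep_densities iota).

Let iotaD u v : iota (u + v) = iota u + iota v. Proof. by case: iota_gft. Qed.
Let iotaZ a v : iota (a *: v) = a%:C *: iota v. Proof. by case: iota_gft. Qed.
Let iota_herm v : iota v \is hermsymmx. Proof. by case: iota_gft. Qed.
Let iota0 : iota 0 = 0.
Proof. by rewrite -(scale0r (0 : V)) iotaZ scale0r. Qed.
Let iotaB u v : iota (u - v) = iota u - iota v.
Proof. by rewrite -scaleN1r iotaD iotaZ rmorphN1 scaleN1r. Qed.
Let n_neq0 : n%:R != 0 :> C.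
Proof. by rewrite pnatr_eq0 -lt0n. Qed.

Lemma iota_starE rho v :
  iota_star iota rho v = complex.Re (\tr (rho *m iota v)).
Proof.
apply: linfun_linearE => a u w.
by rewrite iotaD iotaZ mulmxDr -scalemxAr mxtraceD mxtraceZ raddfD /= Re_realM.
Qed.

Lemma iota_star0 : iota_star iota 0 = 0.
Proof. by apply/lfunP => v; rewrite iota_starE mul0mx mxtrace0 zero_lfunE. Qed.

Lemma iota_starP a A B :
  iota_star iota (a%:C *: A + B) = a *: iota_star iota A + iota_star iota B.
Proof.
apply/lfunP => v; rewrite add_lfunE scale_lfunE !iota_starE.
by rewrite mulmxDl -scalemxAl mxtraceD mxtraceZ raddfD /= Re_realM.
Qed.

Lemma iota_star_sum (I : Type) (r : seq I) (c : I -> R) (A : I -> 'M[C]_n) :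
  iota_star iota (\sum_(i <- r) (c i)%:C *: A i) =
  \sum_(i <- r) c i *: iota_star iota (A i).
Proof.
elim: r => [|i r IH]; first by rewrite !big_nil iota_star0.
by rewrite !big_cons iota_starP IH.
Qed.

Lemma in_aff_hull_iota_star B :
  B \is hermsymmx -> \tr B = 1 -> in_aff_hull S (iota_star iota B).
Proof.
move=> B_herm trB.
have [d [rho [d_real rho_dens B_def]]] := hermsymmx_density_decomposition B_herm.
have {}B_def : B = \sum_i (complex.Re (d i))%:C *: rho i.
  by rewrite B_def; apply: eq_bigr => i _; rewrite RRe_real ?d_real.
rewrite B_def iota_star_sum; apply: in_aff_hull_sum => [i|].
  by exists (rho i).
apply: (@complexI R); rewrite rmorph_sum rmorph1 -trB B_def raddf_sum /=.
apply: eq_bigr => i _.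
by case: (rho_dens i) => _ _ tr1; rewrite mxtraceZ tr1 mulr1.
Qed.

Definition gram : 'Hom(V, 'Hom(V, R^o)) :=
  linfun (fun v => iota_star iota (traceless (iota v))).

Lemma gramE v : gram v = iota_star iota (traceless (iota v)).
Proof. by apply: linfun_linearE => a u w; rewrite iotaD iotaZ linearP iota_starP. Qed.

Variable K : {vspace V}.
Hypothesis K_def : forall v, v \in K <-> exists c : R, iota v = c%:C%:M.

Lemma traceless_iota_eq0 v : traceless (iota v) = 0 <-> v \in K.
Proof.
rewrite K_def; split => [/subr0_eq iota_v | [c ->]]; last exact: traceless_scalar.
have /complex_realP [c c_def] : \tr (iota v) / n%:R \is Num.real.
  by rewrite rpredM ?rpredV ?realn ?hermsymmx_trace_real.
by exists c; rewrite iota_v c_def.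
Qed.

Lemma lker_gram : lker gram = K.
Proof.
apply/vspaceP => v; rewrite memv_ker.
apply/eqP/idP => [|/traceless_iota_eq0 T0]; last by rewrite gramE T0 iota_star0.
move/lfunP/(_ v); rewrite gramE iota_starE zero_lfunE.
set T := traceless (iota v).
have iota_v : iota v = T + (\tr (iota v) / n%:R)%:M by rewrite /T /traceless subrK.
have T_herm : T^t* = T by apply/hermsymmxP/traceless_hermsymmx.
rewrite iota_v mulmxDr mxtraceD mul_mx_scalar mxtraceZ mxtrace_traceless // mulr0 addr0.
rewrite -{2}T_herm => Re_tr0; apply/traceless_iota_eq0/eqP.
rewrite -/T -mxtrace_mul_trC_eq0 -[X in X == _]RRe_real ?Re_tr0 //.
by rewrite ger0_real // mxtrace_mul_trC_ge0.
Qed.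

Lemma limg_gram : limg gram = annihilator K.
Proof.
apply/eqP; rewrite eqEdim dim_annihilator.
have := limg_ker_dim gram fullv; rewrite capfv lker_gram => <-.
rewrite addKn leqnn andbT.
apply/subvP => _ /memv_imgP [v _ ->]; apply/annihilatorP => w /K_def [c iota_w].
by rewrite gramE iota_starE iota_w mul_mx_scalar mxtraceZ mxtrace_traceless // mulr0.
Qed.

Let rho0 : 'M[C]_n := (n%:R^-1)%:M.

Lemma in_aff_hull_rho0_add f :
  f \in annihilator K -> in_aff_hull S (iota_star iota rho0 + f).
Proof.
rewrite -limg_gram => /memv_imgP [v _ ->].
rewrite gramE -[iota_star iota rho0]scale1r -iota_starP rmorph1 scale1r.
apply: in_aff_hull_iota_star.
  by rewrite hermsymmxD ?traceless_hermsymmx ?scalar_hermsymmx ?rpredV ?realn.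
by rewrite mxtraceD mxtrace_traceless // addr0 mxtrace_scalar -[_ *+ n]mulr_natr mulVf.
Qed.

Lemma in_aff_hull_scalar f v c :
  in_aff_hull S f -> iota v = c%:C%:M -> f v = c.
Proof.
move=> f_hull iota_v; apply: in_aff_hull_lfunE f_hull => _ [rho [[_ _ tr1] ->]].
by rewrite iota_starE iota_v mul_mx_scalar mxtraceZ tr1 mulr1.
Qed.

Lemma aff_direction_annihilator f : f \in annihilator K <->
  exists a b, [/\ in_aff_hull S a, in_aff_hull S b & f = a - b].
Proof.
split => [f_ann | [a [b [a_hull b_hull ->]]]].
  exists (iota_star iota rho0 + f), (iota_star iota rho0); split.
  - exact: in_aff_hull_rho0_add.
  - by rewrite -[iota_star iota rho0]addr0; apply/in_aff_hull_rho0_add/mem0v.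
  - by rewrite addrC addKr.
apply/annihilatorP => w /K_def [c iota_w].
rewrite add_lfunE opp_lfunE (in_aff_hull_scalar a_hull iota_w).
by rewrite (in_aff_hull_scalar b_hull iota_w) subrr.
Qed.

Lemma aff_dim_rep_densities d : aff_dim S d <-> d = \dim (annihilator K).
Proof.
split => [[U [U_def <-]] | ->].
  congr (\dim _); apply/vspaceP => f; apply/idP/idP.
    by move/U_def/aff_direction_annihilator.
  by move/aff_direction_annihilator/U_def.
by exists (annihilator K); split => // f; exact: aff_direction_annihilator.
Qed.

Lemma in_aff_hull_all : (forall f, in_aff_hull S f) <-> annihilator K = fullv.
Proof.
split => [all_hull | ann_full f].
  apply/vspaceP => f; rewrite memvf; apply/aff_direction_annihilator.
  by exists f, 0; rewrite subr0.
have : f - iota_star iota rho0 \in annihilator K by rewrite ann_full memvf.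
by move/in_aff_hull_rho0_add; rewrite addrC subrK.
Qed.

Lemma K_eq0 : K = 0%VS <-> injective iota /\ ~ exists v, iota v = 1%:M.
Proof.
have K_scalar c v : iota v = c%:C%:M -> v \in K.
  by move=> iota_v; apply/K_def; exists c.
split => [K0 | [iota_inj no_unit]].
  split => [u v iota_uv | [v iota_v]].
    apply/eqP; rewrite -subr_eq0 -memv0 -K0; apply: (K_scalar 0).
    by rewrite iotaB iota_uv subrr rmorph0.
  have : v \in K by apply: (K_scalar 1); rewrite rmorph1.
  rewrite K0 memv0 => /eqP v0; move: iota_v; rewrite v0 iota0.
  move=> /(congr1 mxtrace)/eqP.
  by rewrite mxtrace0 mxtrace_scalar eq_sym (negbTE n_neq0).
apply/eqP; rewrite -subv0; apply/subvP => v /K_def [c iota_v]; rewrite memv0.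
have [c0 | c_neq0] := eqVneq c 0.
  by apply/eqP/iota_inj; rewrite iota_v iota0 c0 rmorph0.
case: no_unit; exists (c^-1 *: v).
by rewrite iotaZ iota_v scale_scalar_mx -rmorphM mulVf.
Qed.

End GeneralizedFunctionalTheory.

Theorem proposition2p12 (R : realType) (V : vectType R) (n : nat)
    (iota : V -> 'M[R[i]]_n) (W : 'M[R[i]]_n) :
  (0 < n)%N -> gft_map iota -> W \is hermsymmx ->
  forall K : {vspace V},
    (forall v : V, v \in K <-> exists c : R, iota v = (real_complex R c)%:M) ->
  [/\ aff_dim (rep_densities iota) (\dim {:V} - \dim K)%N,
      aff_dim (rep_densities iota) (\dim {:'Hom(V, R^o)})
        <-> (injective iota /\ ~ (exists v : V, iota v = 1%:M))
    & (forall f : 'Hom(V, R^o), in_aff_hull (rep_densities iota) f)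
        <-> K = 0%VS].
Proof.
(* The interaction [W] does not enter [iota^*(E)]. *)
move=> n_gt0 iota_gft _ K K_def.
have aff_dimE := aff_dim_rep_densities n_gt0 iota_gft K_def.
have ann_full : annihilator K = fullv <-> K = 0%VS.
  split => [/eqP | /eqP K0]; first by rewrite annihilator_eqf => /eqP.
  by apply/eqP; rewrite annihilator_eqf.
split.
- by apply/aff_dimE; rewrite dim_annihilator.
- rewrite aff_dimE -(K_eq0 n_gt0 iota_gft K_def) -ann_full.
  split => [/esym/eqP | ->] //.
  by rewrite (dimv_leqif_eq (subvf _)).2 => /eqP.
- exact: iff_trans (in_aff_hull_all n_gt0 iota_gft K_def) ann_full.
Qed.
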